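(* Let $\alpha,\beta\ge 1$ be real numbers and let $w$ be a random variable with the Beta distribution with parameters $\alpha,\beta$, i.e. with density proportional to $x^{\alpha-1}(1-x)^{\beta-1}$ on $[0,1]$. Let $\mu=\alpha/(\alpha+\beta)$ be the mean of $w$. Then $\mathbb{E}[\min(\mu,w)]\ge \mu(1-1/e)$. *)

From HB Require Import structures.
From mathcomp Require Import all_boot all_order all_algebra.
From mathcomp Require Import all_classical all_reals all_analysis.
Set Implicit Arguments. Unset Strict Implicit. Unset Printing Implicit Defensive.
Import Order.TTheory GRing.Theory Num.Theory.
Import numFieldNormedType.Exports.
Local Open Scope classical_set_scope.
Local Open Scope ring_scope.

(* The library's beta distribution
   (beta_distribution.v) only allows natural-number parameters, so we define
   the Beta(a,b) law for real parameters a, b directly. *)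

Definition beta_kernel {R : realType} (a b : R) (x : R) : R :=
  (x `^ (a - 1)) * ((1 - x) `^ (b - 1)).

Definition beta_const {R : realType} (a b : R) : R :=
  \int[lebesgue_measure]_(x in `[0%R, 1%R]) beta_kernel a b x.

Definition beta_density {R : realType} (a b : R) (x : R) : R :=
  beta_kernel a b x / beta_const a b.

Definition beta_expect {R : realType} (a b : R) (f : R -> R) : \bar R :=
  (\int[lebesgue_measure]_(x in `[0%R, 1%R]) (f x * beta_density a b x)%:E)%E.

From HB Require Import structures.
From mathcomp Require Import all_boot all_order all_algebra.
From mathcomp Require Import all_classical all_reals all_analysis.
From mathcomp Require Import ring lra.

(* Let [S(t) = P(w > t)].  For [alpha, beta >= 1] the Beta density is
   log-concave, so its hazard rate is nondecreasing and [ln S] is concave.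
   Comparing [S] with its tangent exponential at the mean [mu] inside
   [E w = int_0^1 S = mu] gives [S(mu) >= 1/e]; concavity of [ln S] on
   [[0, mu]] then gives [S(t) >= exp(- t / mu)] there.  Hence
   [E min(mu, w) = int_0^mu S >= int_0^mu exp(- t / mu) dt = mu (1 - 1/e)]. *)

Set Implicit Arguments.
Unset Strict Implicit.
Unset Printing Implicit Defensive.

Import Order.TTheory GRing.Theory Num.Theory.
Import numFieldNormedType.Exports.
Local Open Scope classical_set_scope.
Local Open Scope ring_scope.

Section calculus.
Context {R : realType}.

Lemma is_derive_continuous (f : R -> R) (x df : R) :
  is_derive x 1 f df -> {for x, continuous f}.
Proof. by case=> d _; apply: differentiable_continuous; apply/derivable1_diffP. Qed.

Lemma ger0_is_derive_le (f df : R -> R) (a b : R) : a <= b ->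
  (forall x, a < x < b -> is_derive x 1 f (df x)) ->
  (forall x, a <= x <= b -> {for x, continuous f}) ->
  (forall x, a < x < b -> 0 <= df x) -> f a <= f b.
Proof.
move=> ab fd fc df0.
apply: (@ger0_derive1_le_cc _ f a b); rewrite ?in_itv/= ?lexx ?ab//.
- by move=> x; rewrite in_itv/= => /fd [].
- by move=> x; rewrite in_itv/= => xab; have fx := fd x xab; rewrite derive1E derive_val df0.
- by apply: continuous_in_subspaceT => x; rewrite inE/= in_itv/= => /fc.
Qed.

Lemma ler0_is_derive_le (f df : R -> R) (a b : R) : a <= b ->
  (forall x, a < x < b -> is_derive x 1 f (df x)) ->
  (forall x, a <= x <= b -> {for x, continuous f}) ->
  (forall x, a < x < b -> df x <= 0) -> f b <= f a.
Proof.
move=> ab fd fc df0; rewrite -lerN2.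
apply: (@ger0_is_derive_le (fun x => - f x) (fun x => - df x)) => // x xab.
- exact: is_deriveN (fd x xab).
- exact: continuousN (fc x xab).
- by rewrite oppr_ge0 df0.
Qed.

(* [powR] is [1] on the negative reals; truncating at [0] makes [x `^ p]
   continuous on the whole real line when [0 <= p]. *)
Definition pospow (p x : R) : R := (Num.max x 0) `^ p.

Lemma pospowE (p x : R) : 0 <= x -> pospow p x = x `^ p.
Proof. by move=> x0; rewrite /pospow max_l. Qed.

Lemma is_derive_pospow (p x : R) : 0 < x ->
  is_derive x 1 (pospow p) (p * x `^ (p - 1)).
Proof.
move=> x0; apply: near_eq_is_derive (is_derive1_powR p x0).
near=> y; rewrite pospowE//; apply/ltW; near: y; exact: lt_nbhsr.
Unshelve. all: by end_near. Qed.

Lemma continuous_pospow (p : R) : 0 <= p -> continuous (pospow p).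
Proof.
move=> p0 x; have [->|pn0] := eqVneq p 0.
  by apply: cvg_near_cst; near=> y; rewrite /pospow !powRr0.
have [x0|x0|->] := ltgtP x 0.
- apply: cvg_near_cst; near=> y.
  have y0 : y <= 0 by apply/ltW; near: y; exact: lt_nbhsl.
  by rewrite /pospow !max_r// ltW.
- by have := is_derive_continuous (is_derive_pospow p x0).
- apply/left_right_continuousP; split.
    apply: cvg_near_cst; near=> y.
    have y0 : y <= 0 by near: y; exact: nbhs_left_le.
    by rewrite /pospow !max_r.
  rewrite {2}/pospow max_r// powR0//.
  have p_gt0 : 0 < p by rewrite lt_def pn0 p0.
  apply: cvg_trans (powR_cvg0 p_gt0).
  apply: near_eq_cvg; near=> y.
  have y0 : 0 < y by near: y; exact: nbhs_right_gt.
  by rewrite pospowE// ltW.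
Unshelve. all: by end_near. Qed.

Lemma continuous_pospowM_onem (p q : R) : 0 <= p -> 0 <= q ->
  continuous (fun y => pospow p y * pospow q (1 - y)).
Proof.
move=> p0 q0 x; apply: (continuousM (s := pospow p)
  (t := pospow q \o (fun y : R => 1 - y))); first exact: continuous_pospow.
apply: continuous_comp; last exact: continuous_pospow.
by apply: cvgB; [exact: cvg_cst | exact: cvg_id].
Qed.

Lemma continuous_integrable_itv (f : R -> R) (a b : R) : continuous f ->
  lebesgue_measure.-integrable `[a, b] (EFin \o f).
Proof.
move=> cf; apply: continuous_compact_integrable; first exact: segment_compact.
exact: continuous_subspaceT.
Qed.

(* A line of slope [- L] through [(t, pt)] lying above [(0, p0)] and [(m, pm)]
   keeps [(t, pt)] above the chord joining these two points. *)
Lemma ler_chord_tangent (m t p0 pt pm L : R) : 0 <= t -> t <= m ->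
  L * (0 - t) <= pt - p0 -> L * (m - t) <= pt - pm ->
  t * (pm - p0) <= m * (pt - p0).
Proof.
move=> t0 tm h0 hm.
have h1 : 0 <= t * (pt - pm - L * (m - t)) by rewrite mulr_ge0 ?subr_ge0.
have h2 : 0 <= (m - t) * (pt - p0 - L * (0 - t)) by rewrite mulr_ge0 ?subr_ge0.
nra.
Qed.

(* The base point [-1] puts [[0, 1]] in the interior of the domain of
   differentiability of [prim f]. *)
Definition prim (f : R -> R) (x : R) : R :=
  \int[lebesgue_measure]_(t in `[-1, x]) f t.

Lemma is_derive_prim (f : R -> R) (x : R) : continuous f -> -1 < x ->
  is_derive x 1 (prim f) (f x).
Proof.
move=> cf x1; have xx1 : x < x + 1 by rewrite ltrDl.
have [? <-] := continuous_FTC1_closed xx1 (continuous_integrable_itv _ _ cf) x1 (cf x).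
by rewrite derive1E; exact: derivableP.
Qed.

Lemma integral01_prim (f : R -> R) : continuous f ->
  (\int[lebesgue_measure]_(x in `[0%R, 1%R]) (f x)%:E = (prim f 1 - prim f 0)%:E)%E.
Proof.
move=> cf; have pf (x : R) : 0 <= x -> is_derive x 1 (prim f) (f x).
  by move=> x0; apply: is_derive_prim => //; lra.
rewrite EFinB; apply: continuous_FTC2 ltr01 _ _ _.
- exact: continuous_subspaceT.
- split.
  + by move=> x; rewrite in_itv/= => /andP[/ltW/pf[]].
  + by apply: cvg_at_right_filter; exact: is_derive_continuous (pf 0 (lexx 0)).
  + by apply: cvg_at_left_filter; exact: is_derive_continuous (pf 1 ler01).
- by move=> x; rewrite in_itv/= => /andP[/ltW/pf fx _]; rewrite derive1E derive_val.
Qed.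

Lemma is_derive_comp_shift (g : R -> R) (k x dg : R) :
  is_derive (x + k) 1 g dg -> is_derive x 1 (fun s => g (s + k)) dg.
Proof.
move=> gd; have := @is_derive1_comp _ g (shift k) x dg 1 gd (is_derive_shift x 1 k).
by rewrite mulr1.
Qed.

Lemma is_derive_expR_affine (L c x : R) :
  is_derive x 1 (fun v => expR (L * v + c)) (expR (L * x + c) * L).
Proof.
have aff : is_derive x 1 (L *: id + cst c : R -> R) L.
  by apply: is_derive_eq; rewrite /GRing.scale/= mulr1 addr0.
exact: is_derive1_comp (is_derive_expR _) aff.
Qed.

End calculus.

Section logconcave_density.
Context {R : realType}.
Variables (f : R -> R) (m : R).
Hypothesis f_cont : continuous f.
Hypothesis f_ge0 : forall x : R, 0 <= f x.
Hypothesis f_gt0 : forall x : R, 0 < x < 1 -> 0 < f x.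
Hypothesis f_logconcave : forall x y s : R, 0 <= x -> x <= y -> 0 <= s ->
  y + s <= 1 -> f x * f (y + s) <= f y * f (x + s).
Hypothesis m_gt0 : 0 < m.
Hypothesis m_lt1 : m < 1.
Hypothesis mean_ge : m * (prim f 1 - prim f 0) <=
  prim (fun x => x * f x) 1 - prim (fun x => x * f x) 0.

(* Unnormalised survival function: [tail x / tail 0 = P(w > x)]. *)
Definition tail (x : R) : R := prim f 1 - prim f x.

Definition hazard (x : R) : R := f x / tail x.

Lemma is_derive_tail (x : R) : -1 < x -> is_derive x 1 tail (- f x).
Proof.
move=> x1; have := is_derive_prim f_cont x1 => ?.
have -> : tail = cst (prim f 1) - prim f by [].
by apply: is_derive_eq; rewrite sub0r.
Qed.

Lemma prim_ndecr (x y : R) : -1 < x -> x <= y -> prim f x <= prim f y.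
Proof.
move=> x1 xy; apply: (@ger0_is_derive_le _ _ f) => // z /andP[xz _].
- by apply: is_derive_prim; rewrite ?(lt_trans x1).
- by apply: is_derive_continuous (is_derive_prim f_cont _); rewrite (lt_le_trans x1).
Qed.

Lemma tail_nincr (x y : R) : -1 < x -> x <= y -> tail y <= tail x.
Proof. by move=> x1 xy; rewrite lerB// prim_ndecr. Qed.

Lemma tail1 : tail 1 = 0. Proof. exact: subrr. Qed.

Lemma tail_gt0 (t : R) : 0 <= t < 1 -> 0 < tail t.
Proof.
move=> /andP[t0 t1].
have pd x : x \in `]t, 1[ -> is_derive x 1 (prim f) (f x).
  by rewrite in_itv/= => /andP[tx _]; apply: is_derive_prim => //; lra.
have pc : {within `[t, 1], continuous prim f}.
  apply: continuous_in_subspaceT => x; rewrite inE/= in_itv/= => /andP[tx _].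
  by apply: is_derive_continuous (is_derive_prim f_cont _); lra.
have [c] := MVT t1 pd pc; rewrite in_itv/= /tail => /andP[tc c1] ->.
by rewrite mulr_gt0 ?subr_gt0// f_gt0// c1 (le_lt_trans t0).
Qed.

(* The hazard rate [f / tail] is nondecreasing; the statement is
   cross-multiplied so that it also covers [y = 1]. *)
Lemma hazard_ndecr (x y : R) : 0 <= x -> x <= y -> y <= 1 ->
  f x * tail y <= f y * tail x.
Proof.
move=> x0 xy y1; have y0 : 0 <= y by exact: le_trans xy.
pose T s := f y * (prim f (s + x) - prim f x) - f x * (prim f (s + y) - prim f y).
suff : T 0 <= T (1 - y).
  rewrite /T !add0r !subrr !mulr0 subrr subrK subr_ge0 => /le_trans; apply.
  by rewrite ler_wpM2l// lerB// prim_ndecr//; lra.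
have Td (s : R) : 0 <= s -> is_derive s 1 T (f y * f (s + x) - f x * f (s + y)).
  move=> s0; have := is_derive_comp_shift (is_derive_prim f_cont (_ : -1 < s + x)).
  have := is_derive_comp_shift (is_derive_prim f_cont (_ : -1 < s + y)).
  move=> /(_ ltac:(lra)) ? /(_ ltac:(lra)) ?.
  have -> : T = f y \*: ((fun s => prim f (s + x)) - cst (prim f x)) -
                f x \*: ((fun s => prim f (s + y)) - cst (prim f y)) by [].
  by apply: is_derive_eq; rewrite /GRing.scale/= !subr0.
apply: (ger0_is_derive_le (df := fun s => f y * f (s + x) - f x * f (s + y))).
- lra.
- by move=> s /andP[s0 _]; apply: Td; exact: ltW.
- by move=> s /andP[s0 _]; exact: is_derive_continuous (Td s s0).
- by move=> s /andP[s0 s1]; rewrite subr_ge0 ![s + _]addrC f_logconcave//; lra.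
Qed.

(* [ln tail] lies below its tangent at [t], whose slope is [- hazard t]. *)
Lemma tail_le_tangent (t s : R) : 0 < t < 1 -> 0 <= s <= 1 ->
  tail s * expR (hazard t * (s - t)) <= tail t.
Proof.
move=> /andP[t0 t1] /andP[s0 s1].
have tail_t : 0 < tail t by rewrite tail_gt0// ltW.
set L := hazard t.
pose g v := tail v * expR (L * v + - (L * t)).
have gd (v : R) : 0 <= v -> is_derive v 1 g (expR (L * v - L * t) * (L * tail v - f v)).
  move=> v0; have := is_derive_tail (_ : -1 < v) => /(_ ltac:(lra)) ?.
  have := is_derive_expR_affine L (- (L * t)) v => ?.
  by apply: is_derive_eq; rewrite /GRing.scale/=; ring.
have gc (v : R) : 0 <= v -> {for v, continuous g}.
  by move=> v0; exact: is_derive_continuous (gd v v0).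
have -> : tail t = g t by rewrite /g subrr expR0 mulr1.
have -> : tail s * expR (L * (s - t)) = g s by rewrite /g mulrBr.
have hazard_cmp (v : R) : (L * tail v - f v) * tail t = f t * tail v - f v * tail t.
  by rewrite /L /hazard mulrBl mulrAC divfK ?gt_eqF.
have [st|ts] := leP s t.
- apply: (ger0_is_derive_le (df := fun v => expR (L * v - L * t) * (L * tail v - f v))) => //.
  + by move=> v /andP[sv _]; apply: gd; exact: le_trans (ltW sv).
  + by move=> v /andP[sv _]; apply: gc; exact: le_trans sv.
  + move=> v /andP[sv vt]; rewrite mulr_ge0 ?expR_ge0//.
    rewrite -(pmulr_lge0 _ tail_t) hazard_cmp ?subr_ge0 ?hazard_ndecr; lra.
- apply: (ler0_is_derive_le (df := fun v => expR (L * v - L * t) * (L * tail v - f v))).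
  + exact: ltW.
  + by move=> v /andP[tv _]; apply: gd; lra.
  + by move=> v /andP[tv _]; apply: gc; lra.
  + move=> v /andP[tv vs]; rewrite mulr_ge0_le0 ?expR_ge0//.
    rewrite -(pmulr_lle0 _ tail_t) hazard_cmp ?subr_le0 ?hazard_ndecr; lra.
Qed.

Lemma hazard_gt0 (t : R) : 0 < t < 1 -> 0 < hazard t.
Proof. by move=> /andP[t0 t1]; rewrite divr_gt0 ?f_gt0 ?t0// tail_gt0// ltW. Qed.

Notation Q := (prim (fun x => x * f x)).

Lemma continuous_idMf : continuous (fun x : R => x * f x).
Proof. by move=> x; apply: continuousM; [exact: cvg_id | exact: f_cont]. Qed.

(* [tail_int x] equals the integral of [tail] over [[0, x]], by parts. *)
Definition tail_int (x : R) : R := Q x - Q 0 + x * tail x.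

Lemma is_derive_tail_int (x : R) : -1 < x -> is_derive x 1 tail_int (tail x).
Proof.
move=> x1; apply: (is_derive_eq (is_deriveD
  (is_deriveB (is_derive_prim continuous_idMf x1) (is_derive_cst (Q 0) x 1))
  (is_deriveM (is_derive_id x 1) (is_derive_tail x1)))).
by rewrite /GRing.scale/=; ring.
Qed.

Lemma tail_int_le (x : R) : 0 <= x -> tail_int x <= tail 0 * x.
Proof.
move=> x0.
have Kd (y : R) : 0 <= y -> is_derive y 1 (fun y => tail_int y - tail 0 * y) (tail y - tail 0).
  move=> y0; have := is_derive_tail_int (_ : -1 < y) => /(_ ltac:(lra)) ?.
  have -> : (fun y => tail_int y - tail 0 * y) = tail_int - tail 0 \*: id by [].
  by apply: is_derive_eq; rewrite /GRing.scale/= mulr1.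
have : tail_int x - tail 0 * x <= tail_int 0 - tail 0 * 0.
  apply: (@ler0_is_derive_le _ (fun y => tail_int y - tail 0 * y)
    (fun y => tail y - tail 0)) => // y /andP[y0 _].
  - by apply: Kd; exact: ltW.
  - exact: is_derive_continuous (Kd y y0).
  - by rewrite subr_le0 tail_nincr ?ltrN10 ?ltW.
by rewrite /tail_int subrr !mul0r mulr0 addr0 subr0 subr_le0.
Qed.

Lemma tail_int_gap (u : R) : 0 <= u <= 1 ->
  tail_int 1 - tail_int u <= tail m * expR (hazard m * (m - u)) / hazard m.
Proof.
move=> /andP[u0 u1].
have c0 : 0 < hazard m by rewrite hazard_gt0// m_gt0.
set c := hazard m.
pose V x := tail m * expR (- c * x + c * m) / c.
have Wd (x : R) : 0 <= x -> is_derive x 1 (fun x => tail_int x + V x)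
    (tail x - tail m * expR (- c * x + c * m)).
  move=> x0; have := is_derive_tail_int (_ : -1 < x) => /(_ ltac:(lra)) ?.
  have := is_derive_expR_affine (- c) (c * m) x => ?.
  have -> : (fun x => tail_int x + V x) =
    tail_int + (tail m / c) \*: (fun x => expR (- c * x + c * m)).
    by apply/funext => y /=; rewrite /V mulrAC.
  by apply: is_derive_eq; rewrite /GRing.scale/=; field; rewrite gt_eqF.
have : tail_int 1 + V 1 <= tail_int u + V u.
  apply: (@ler0_is_derive_le _ (fun x => tail_int x + V x)
    (fun x => tail x - tail m * expR (- c * x + c * m))) => //.
  - by move=> x /andP[ux _]; apply: Wd; lra.
  - by move=> x /andP[ux _]; apply: is_derive_continuous (Wd x _); lra.
  move=> x /andP[ux x1]; rewrite subr_le0 -ler_pdivrMr ?expR_gt0// -expRN.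
  have -> : - (- c * x + c * m) = c * (x - m) by ring.
  by apply: tail_le_tangent; rewrite ?m_gt0 ?m_lt1//; lra.
have pm : 0 < tail m by rewrite tail_gt0// (ltW m_gt0) m_lt1.
have V1 : 0 <= V 1 by rewrite /V !(divr_ge0, mulr_ge0, expR_ge0, ltW pm, ltW c0).
have -> : tail m * expR (c * (m - u)) / c = V u by rewrite /V mulrBr mulNr addrC.
lra.
Qed.

(* Since [int_0^1 tail = tail_int 1 >= m * tail 0], bounding [tail] by
   [tail 0] on [[0, t0]] and by its tangent exponential at [m] on [[t0, 1]],
   where [t0] is the point at which these two bounds agree, forces
   [ln (tail m / tail 0) >= -1]. *)
Lemma tail_mean_ge : tail 0 * expR (-1) <= tail m.
Proof.
have B0 : 0 < tail 0 by rewrite tail_gt0// lexx ltr01.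
have pm : 0 < tail m by rewrite tail_gt0// (ltW m_gt0) m_lt1.
have c0 : 0 < hazard m by rewrite hazard_gt0// m_gt0.
set B := tail 0; set c := hazard m; set A := tail m / B.
have A0 : 0 < A by rewrite divr_gt0.
have A1 : A <= 1 by rewrite ler_pdivrMr// mul1r tail_nincr ?ltrN10 ?ltW.
set t0 := m + ln A / c.
have lnA : ln A <= 0 by rewrite ln_le0.
have t0m : t0 <= m by rewrite /t0 gerDl pmulr_lle0// invr_gt0.
have t00 : 0 <= t0.
  have := tail_le_tangent (t:=m) (s:=0); rewrite m_gt0 m_lt1 lexx ler01 => /(_ isT isT).
  rewrite -/B -/c => tangent0.
  have : c * (0 - m) <= ln A by rewrite -ler_expR lnK ?posrE// ler_pdivlMr// mulrC.
  move=> lnA_ge; rewrite /t0 -(@ler_pM2r _ c)// mul0r mulrDl divfK ?gt_eqF//; lra.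
have gap : tail_int 1 - tail_int t0 <= B / c.
  have -> : B / c = tail m * expR (c * (m - t0)) / c.
    have -> : c * (m - t0) = - ln A by rewrite /t0; field; rewrite gt_eqF.
    by rewrite expRN lnK ?posrE// /A; field; rewrite !gt_eqF.
  by apply: tail_int_gap; rewrite t00 (le_trans t0m (ltW m_lt1)).
have int1 : tail_int 1 = Q 1 - Q 0 by rewrite /tail_int tail1 mulr0 addr0.
have := tail_int_le t00; rewrite -/B => int_t0.
have hmean : m * B <= tail_int 1 by rewrite int1.
have : 0 <= B * (ln A + 1) / c.
  have -> : B * (ln A + 1) / c = B * t0 + B / c - m * B by rewrite /t0; field; rewrite gt_eqF.
  lra.
rewrite -mulrA pmulr_rge0// pmulr_lge0 ?invr_gt0// => lnA1.
have : expR (-1) <= A by rewrite -[A]lnK ?posrE// ler_expR; lra.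
by rewrite ler_pdivlMr// mulrC.
Qed.

Lemma tail_ge_expR (t : R) : 0 <= t <= m -> tail 0 * expR (- (t / m)) <= tail t.
Proof.
move=> /andP[t0 tm].
have B0 : 0 < tail 0 by rewrite tail_gt0// lexx ltr01.
have [->|tn0] := eqVneq t 0; first by rewrite mul0r oppr0 expR0 mulr1.
have t_gt0 : 0 < t by rewrite lt_def tn0 t0.
have tt : 0 < t < 1 by rewrite t_gt0 (le_lt_trans tm).
have pt : 0 < tail t by rewrite tail_gt0// t0 (le_lt_trans tm).
have pm : 0 < tail m by rewrite tail_gt0// (ltW m_gt0) m_lt1.
have ln_le (x y z : R) : 0 < x -> 0 < z -> x * expR y <= z -> y <= ln z - ln x.
  move=> x0 z0; rewrite lerBrDr addrC -ler_ln ?posrE ?mulr_gt0 ?expR_gt0//.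
  by rewrite lnM ?posrE ?expR_gt0// expRK.
have e0 := ln_le _ _ _ B0 pt (@tail_le_tangent t 0 tt ltac:(by rewrite lexx ler01)).
have em := ln_le _ _ _ pm pt (@tail_le_tangent t m tt ltac:(by rewrite !ltW)).
have chord := ler_chord_tangent t0 tm e0 em.
have mean_tail : -1 <= ln (tail m) - ln (tail 0) by apply: ln_le tail_mean_ge.
have : - t <= m * (ln (tail t) - ln (tail 0)).
  by apply: le_trans chord; rewrite -mulrN1 ler_wpM2l.
rewrite -ler_pdivrMl// mulrN mulrC => h.
rewrite mulrC -ler_pdivlMr// -[tail t / tail 0]lnK ?posrE ?divr_gt0//.
by rewrite ler_expR ln_div ?posrE.
Qed.

Lemma continuous_minMf : continuous (fun x : R => Num.min m x * f x).
Proof.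
move=> x; apply: continuousM; last exact: f_cont.
by apply: continuous_min; [exact: cvg_cst | exact: cvg_id].
Qed.

(* By parts, [int_0^1 min(m, x) f x dx = int_0^m tail]; [D1] and [D2] are the
   antiderivatives comparing it with [int_0^m tail 0 * exp (- t / m) dt]. *)
Lemma prim_minMf_ge : m * (1 - expR (-1)) * tail 0 <=
  prim (fun x => Num.min m x * f x) 1 - prim (fun x => Num.min m x * f x) 0.
Proof.
set h := fun x => Num.min m x * f x.
have B0 : 0 < tail 0 by rewrite tail_gt0// lexx ltr01.
pose D1 x := prim h x + x * tail x + m * tail 0 * expR (- m^-1 * x + 0).
pose D2 x := prim h x + m * tail x.
have hd (x : R) : 0 <= x -> is_derive x 1 (prim h) (h x).
  by move=> x0; apply: is_derive_prim continuous_minMf _; lra.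
have td (x : R) : 0 <= x -> is_derive x 1 tail (- f x).
  by move=> x0; apply: is_derive_tail; lra.
have D1d (x : R) : 0 <= x <= m ->
    is_derive x 1 D1 (tail x - tail 0 * expR (- m^-1 * x + 0)).
  move=> /andP[x0 xm]; apply: (is_derive_eq (is_deriveD
    (is_deriveD (hd x x0) (is_deriveM (is_derive_id x 1) (td x x0)))
    (is_deriveZ (m * tail 0) (is_derive_expR_affine (- m^-1) 0 x)))).
  by rewrite /GRing.scale/= /h min_r//; field; rewrite gt_eqF.
have D2d (x : R) : m <= x -> is_derive x 1 D2 0.
  move=> mx; have x0 : 0 <= x by exact: le_trans (ltW m_gt0) mx.
  have ? := hd x x0; have ? := td x x0.
  have -> : D2 = prim h + m \*: tail by [].
  by apply: is_derive_eq; rewrite /GRing.scale/= /h min_l//; ring.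
have s1 : D1 0 <= D1 m.
  apply: (ger0_is_derive_le (df := fun x => tail x - tail 0 * expR (- m^-1 * x + 0))).
  - exact: ltW.
  - by move=> x /andP[x0 xm]; apply: D1d; rewrite !ltW.
  - by move=> x xm; exact: is_derive_continuous (D1d x xm).
  - move=> x /andP[x0 xm]; rewrite subr_ge0 addr0 mulNr [m^-1 * x]mulrC.
    by apply: tail_ge_expR; rewrite !ltW.
have s2 : D2 m <= D2 1.
  apply: (ger0_is_derive_le (df := fun=> 0)) => //.
  - exact: ltW.
  - by move=> x /andP[mx _]; apply: D2d; exact: ltW.
  - by move=> x /andP[mx _]; exact: is_derive_continuous (D2d x mx).
move: s1 s2; rewrite /D1 /D2 tail1 mul0r mulr0 !addr0 mulNr mulVf ?gt_eqF// expR0.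
lra.
Qed.

End logconcave_density.

Section beta_kernel.
Context {R : realType}.
Variables (a b : R).
Hypotheses (a_ge1 : 1 <= a) (b_ge1 : 1 <= b).

Definition beta_kernelc (x : R) : R := pospow (a - 1) x * pospow (b - 1) (1 - x).

Let a1_ge0 : 0 <= a - 1. Proof. by rewrite subr_ge0. Qed.
Let b1_ge0 : 0 <= b - 1. Proof. by rewrite subr_ge0. Qed.

Lemma beta_kernelcE (x : R) : 0 <= x <= 1 -> beta_kernelc x = beta_kernel a b x.
Proof. by move=> /andP[x0 x1]; rewrite /beta_kernelc !pospowE// subr_ge0. Qed.

Lemma continuous_beta_kernelc : continuous beta_kernelc.
Proof. exact: continuous_pospowM_onem. Qed.

Lemma beta_kernelc_ge0 (x : R) : 0 <= beta_kernelc x.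
Proof. by rewrite mulr_ge0// powR_ge0. Qed.

Lemma beta_kernelc_gt0 (x : R) : 0 < x < 1 -> 0 < beta_kernelc x.
Proof.
move=> /andP[x0 x1]; rewrite beta_kernelcE ?ltW ?x0//.
by rewrite mulr_gt0// powR_gt0// subr_gt0.
Qed.

Lemma beta_kernelc_logconcave (x y s : R) : 0 <= x -> x <= y -> 0 <= s ->
  y + s <= 1 -> beta_kernelc x * beta_kernelc (y + s) <= beta_kernelc y * beta_kernelc (x + s).
Proof.
move=> x0 xy s0 ys1; have y0 : 0 <= y by exact: le_trans xy.
rewrite !beta_kernelcE ?(ltW x0); try (apply/andP; split; lra).
rewrite /beta_kernel mulrACA [X in _ <= X]mulrACA -!powRM; try lra.
by apply: ler_pM; rewrite ?powR_ge0// ge0_ler_powR// ?nnegrE; nra.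
Qed.

Lemma is_derive_beta_moment (x : R) : 0 < x < 1 ->
  is_derive x 1 (fun y => pospow a y * pospow b (1 - y))
    ((a - (a + b) * x) * beta_kernelc x).
Proof.
move=> /andP[x0 x1].
have onem_d : is_derive x 1 (cst 1 - id : R -> R) (-1) by apply: is_derive_eq; rewrite sub0r.
have x1' : 0 < 1 - x by rewrite subr_gt0.
have := @is_derive1_comp _ (pospow b) (cst 1 - id) x _ _ (is_derive_pospow b x1') onem_d => ?.
have := is_derive_pospow a x0 => ?.
have -> : (fun y => pospow a y * pospow b (1 - y)) =
  pospow a * (pospow b \o (cst 1 - id : R -> R)) by [].
apply: is_derive_eq; rewrite /GRing.scale/= /beta_kernelc !pospowE ?subr_ge0 ?ltW//=.
have [a_gt0 b_gt0] : 0 < a /\ 0 < b by split; apply: lt_le_trans ltr01 _.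
by rewrite -(mulr_powRB1 (ltW x0) a_gt0) -(mulr_powRB1 (ltW x1') b_gt0); ring.
Qed.

Lemma beta_kernelc_mean :
  a * (prim beta_kernelc 1 - prim beta_kernelc 0) =
  (a + b) * (prim (fun x => x * beta_kernelc x) 1 - prim (fun x => x * beta_kernelc x) 0).
Proof.
set P := prim beta_kernelc; set Q := prim (fun x => x * beta_kernelc x).
pose F := (a + b) \*: Q - a \*: P.
pose G := fun y => pospow a y * pospow b (1 - y).
have Fd (x : R) : -1 < x ->
    is_derive x 1 F ((a + b) * (x * beta_kernelc x) - a * beta_kernelc x).
  move=> x1; have ? : is_derive x 1 P (beta_kernelc x).
    exact: is_derive_prim continuous_beta_kernelc x1.
  have ? : is_derive x 1 Q (x * beta_kernelc x).
    apply: is_derive_prim x1 => y.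
    by apply: continuousM; [exact: cvg_id | exact: continuous_beta_kernelc].
  exact: is_derive_eq.
have FGd (x : R) : x \in `]0, 1[ -> is_derive x 1 (F + G) 0.
  rewrite in_itv/= => x01; have ? := is_derive_beta_moment x01.
  have ? := Fd x ltac:(move: x01 => /andP[x0 _]; lra).
  by apply: is_derive_eq; ring.
have FGc : {within `[0, 1], continuous (F + G)}.
  apply: continuous_in_subspaceT => x; rewrite inE/= in_itv/= => /andP[x0 _].
  apply: continuousD; first by apply: is_derive_continuous (Fd x _); lra.
  exact: continuous_pospowM_onem (le_trans ler01 a_ge1) (le_trans ler01 b_ge1) x.
have [c _] := MVT ltr01 FGd FGc; rewrite mul0r /F /G /=.
rewrite !fctE/= subrr subr0 !pospowE ?ler01 ?lexx//.
have [a0 b0] : a != 0 /\ b != 0 by rewrite !gt_eqF ?(lt_le_trans ltr01).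
rewrite !powR0// /GRing.scale/= mulr0 mul0r !addr0; lra.
Qed.

End beta_kernel.

Theorem lemma1 (R : realType) (alpha beta : R) (ha : 1 <= alpha) (hb : 1 <= beta) :
  let mu := alpha / (alpha + beta) in
  ((mu * (1 - expR (-1)))%:E <= beta_expect alpha beta (fun x => Num.min mu x))%E.
Proof.
cbv zeta; set mu := alpha / (alpha + beta); set k := beta_kernelc alpha beta.
have k_cont : continuous k := continuous_beta_kernelc ha hb.
have k_gt0 := beta_kernelc_gt0 alpha beta.
have [a_gt0 b_gt0] : 0 < alpha /\ 0 < beta by split; apply: lt_le_trans ltr01 _.
have mu_gt0 : 0 < mu by rewrite divr_gt0// addr_gt0.
have mu_lt1 : mu < 1 by rewrite ltr_pdivrMr ?addr_gt0// mul1r ltrDl.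
have mean : mu * (prim k 1 - prim k 0) <=
    prim (fun x => x * k x) 1 - prim (fun x => x * k x) 0.
  by rewrite mulrAC (beta_kernelc_mean ha hb) mulrAC divff ?gt_eqF ?addr_gt0 ?mul1r.
have := prim_minMf_ge k_cont (beta_kernelc_ge0 alpha beta) k_gt0
  (beta_kernelc_logconcave ha hb) mu_gt0 mu_lt1 mean.
have B_gt0 : 0 < tail k 0 by rewrite (tail_gt0 k_cont k_gt0)// lexx ltr01.
have const : beta_const alpha beta = tail k 0.
  transitivity (\int[lebesgue_measure]_(x in `[0%R, 1%R]) k x)%R.
    by apply: eq_Rintegral => x; rewrite inE/= in_itv/= => /beta_kernelcE <-.
  by rewrite /Rintegral integral01_prim.
rewrite /beta_expect.
under eq_integral => x.
  rewrite inE/= in_itv/= => x01.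
  rewrite /beta_density -(beta_kernelcE _ _ x01) const mulrA EFinM.
  over.
rewrite integralZr//=; last exact: continuous_integrable_itv 0 1 (@continuous_minMf _ k mu k_cont).
rewrite integral01_prim; last exact: continuous_minMf.
by rewrite -EFinM lee_fin ler_pdivlMr.
Qed.
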